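(* Let $q$ be a power of the prime $p$, $n$ a positive integer, $a\in\mathbb{F}_q$ with $a^n=1$, and $\delta\in\mathbb{F}_{q^n}$ nonzero with $\delta^q=a\delta$. Let $L_{g_a}(x)=x^{q^{n-1}}+a x^{q^{n-2}}+\cdots+a^{n-1}x$ (the linearized $q$-associate of $g_a(x)=\frac{x^n-1}{x-a}$). Let $f(x)=\sum_{i=0}^m a_i x^i\in\mathbb{F}_{q^n}[x]$, $h\in\mathbb{F}_q[x]$, and $k\in\mathbb{F}_{q^n}[x]$ with $k(\delta\mathbb{F}_q)\subseteq\mathbb{F}_q^*$, and let $P(x)=f(L_{g_a}(x))+k(L_{g_a}(x))\cdot L_h(x)$. Then $P$ is a permutation polynomial of $\mathbb{F}_{q^n}$ if and only if: (1) $\gcd\left(h(x),\frac{x^n-1}{x-a}\right)=1$; and (2) $\bar{Q}_a(x)=\frac{1}{a}\sum_{i=0}^m\mathrm{Tr}_{q^n/q}(\delta^{i-1}a_i)x^i+k(\delta x)h(a)x$ induces a permutation of $\mathbb{F}_q$. Moreover, in this case, if $R$ induces the inverse permutation of $\bar{Q}_a$ on $\mathbb{F}_q$, then the inverse of the permutation of $\mathbb{F}_{q^n}$ induced by $P$ is induced by $$P_0(x)=F(\delta^{-1}L_{g_a}(x))+k(\delta R(\delta^{-1}L_{g_a}(x)))^{q-2}\cdot L_H(x),$$ where $H\in\mathbb{F}_q[x]$ and $F\in\mathbb{F}_{q^n}[x]$ are as follows: (i) if $p\mid n$: $H$ is the unique polynomial of degree at most $n-1$ with $h(x)H(x)\equiv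 1\pmod{x^n-1}$ (such $H$ exists, since when $p\mid n$ condition (1) is equivalent to $\gcd(h(x),x^n-1)=1$), and $F$ is any polynomial with $F(x)\equiv -k(\delta R(x))^{q-2}\cdot L_H(f(\delta R(x)))\pmod{x^q-x}$; (ii) if $p\nmid n$: $H$ is the unique polynomial of degree at most $n-2$ with $h(x)H(x)\equiv 1\pmod{\frac{x^n-1}{x-a}}$, and $F$ is any polynomial with $F(x)\equiv M(\delta R(x))\pmod{x^q-x}$, where $M(x)=-k(x)^{q-2}\cdot L_H(f(x))+a x\cdot\frac{1-h(a)H(a)}{n}$.
   Context: For $u(x)=\sum_{i=0}^m c_i x^i\in\mathbb{F}_q[x]$, its linearized $q$-associate is $L_u(x)=\sum_{i=0}^m c_i x^{q^i}$. $\mathrm{Tr}_{q^n/q}(x)=x+x^q+\cdots+x^{q^{n-1}}$. A permutation polynomial of a finite field is a polynomial inducing a bijection of it. *)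

From HB Require Import structures.
From mathcomp Require Import all_boot all_order all_algebra all_field.
Set Implicit Arguments. Unset Strict Implicit. Unset Printing Implicit Defensive.
Import GRing.Theory.
Local Open Scope ring_scope.

Section Defs.
Variable L : finFieldType.
Variable q : nat.

Definition Fq : {pred L} := [pred x : L | x ^+ q == x].

Definition poly_over_Fq (u : {poly L}) : Prop := forall i, u`_i \in Fq.

Definition LinP (u : {poly L}) : {poly L} :=
  \sum_(i < size u) u`_i *: 'X^(q ^ i).
Definition Lin (u : {poly L}) (x : L) : L := (LinP u).[x].

Definition Tr (n : nat) (x : L) : L := \sum_(i < n) x ^+ (q ^ i).

Definition ga (n : nat) (a : L) : {poly L} := ('X^n - 1) %/ ('X - a%:P).

Definition Pmap (n : nat) (a : L) (f h k : {poly L}) (x : L) : L :=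
  f.[Lin (ga n a) x] + k.[Lin (ga n a) x] * Lin h x.

Definition Qbar (n : nat) (a delta : L) (f h k : {poly L}) (x : L) : L :=
  a^-1 * (\sum_(i < size f) Tr n (delta ^+ i / delta * f`_i) * x ^+ i)
  + k.[delta * x] * h.[a] * x.

Definition P0map (n : nat) (a delta : L) (k R H F : {poly L}) (x : L) : L :=
  F.[delta^-1 * Lin (ga n a) x]
  + (k.[delta * R.[delta^-1 * Lin (ga n a) x]]) ^+ (q - 2) * Lin H x.

Definition permutes_on (S : {pred L}) (g : L -> L) : Prop :=
  {in S, forall x, g x \in S} /\ {in S &, injective g}.

End Defs.

From Pilot Require Import Defs.
From HB Require Import structures.
From mathcomp Require Import all_boot all_order all_algebra all_field.
From mathcomp Require Import zify ring.
Set Implicit Arguments.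
Unset Strict Implicit.
Unset Printing Implicit Defensive.
Import GRing.Theory.
Local Open Scope ring_scope.

(* Write T for L_{g_a}. As (x - a) g_a = x^n - 1 and x^(q^n) = x on L, we get
   T(x)^q = a T(x), so T maps L into delta F_q; for u in F_q[x] dividing
   x^n - 1, L_u has exactly q^(deg u) roots, so T is onto delta F_q. T is F_q-linear, commutes with L_h and satisfies
   T(delta b) = delta a^-1 Tr(b), whence T(P(x)) = delta Qbar(delta^-1 T(x)).
   Thus P is injective iff Qbar is injective on F_q and L_h, T have no common
   nonzero root, i.e. (Bezout, resp. counting the roots of L_gcd) iff
   gcd(h, g_a) = 1. For the inverse, L_H(P(x)) = L_H(f(T x)) + k(T x) L_(Hh)(x)
   and Hh = 1 modulo x^n - 1 (resp. g_a), so x is recovered from L_H(P(x))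
   and T(x) = delta R(delta^-1 T(P(x))). *)

Lemma card_ker_mul_card_image (V W : finZmodType) (g : V -> W) :
    {morph g : x y / x + y} ->
  #|V| = (#|[set x | g x == 0%R]| * #|[set g x | x in V]|)%N.
Proof.
move=> gD; have gB : {morph g : x y / x - y}.
  by move=> x y; apply: (addIr (g y)); rewrite -gD !subrK.
rewrite -[#|V|]sum1_card (partition_big g (mem [set g x | x in V])) /=; last first.
  by move=> x _; apply/imsetP; exists x.
rewrite mulnC -sum_nat_const; apply: eq_bigr => _ /imsetP[x0 _ ->].
rewrite sum1_card -[RHS](card_imset _ (addIr x0)); apply: eq_card => x.
rewrite -[LHS]/(g x == g x0); apply/eqP/imsetP => [gx | [y]].
  by exists (x - x0); rewrite ?inE ?gB ?gx ?subrr // subrK.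
by rewrite inE => /eqP gy ->; rewrite gD gy add0r.
Qed.

Lemma card_root_set (F : finFieldType) (u : {poly F}) : u != 0 ->
  (#|[set x | root u x]| <= (size u).-1)%N.
Proof.
move=> u_neq0; rewrite cardE -ltnS prednK ?size_poly_gt0 //.
apply: (max_poly_roots u_neq0); last exact: enum_uniq.
by apply/allP => x; rewrite mem_enum inE.
Qed.

Section FrobeniusPower.
Variables (L : finFieldType) (q : nat).
Hypotheses (q_pchar : [pchar L].-nat q) (q_gt1 : (1 < q)%N).

Local Notation Fq := (@Fq L q).
Local Notation Lin := (@Lin L q).
Local Notation LinP := (@LinP L q).
Implicit Types (x y c : L) (u v : {poly L}).

Definition frobq x := x ^+ q.

Fact frobq_is_nmod_morphism : nmod_morphism frobq.
Proof.
split=> [|x y]; first by rewrite /frobq expr0n gtn_eqF ?(ltnW q_gt1).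
exact: exprDn_pchar.
Qed.

Fact frobq_is_monoid_morphism : monoid_morphism frobq.
Proof. by split=> [|x y]; [exact: expr1n | exact: exprMn]. Qed.

HB.instance Definition _ :=
  GRing.isNmodMorphism.Build L L frobq frobq_is_nmod_morphism.
HB.instance Definition _ :=
  GRing.isMonoidMorphism.Build L L frobq frobq_is_monoid_morphism.

Lemma FqE x : (x \in Fq) = (frobq x == x). Proof. by []. Qed.

Fact Fq_divring_closed : divring_closed Fq.
Proof.
by split=> [|x y|x y]; rewrite !FqE ?rmorph1 ?rmorphB ?rmorphM ?fmorphV //= => /eqP-> /eqP->.
Qed.

HB.instance Definition _ := GRing.isDivringClosed.Build L Fq Fq_divring_closed.

Lemma Fq_expq_pow x i : x \in Fq -> x ^+ (q ^ i) = x.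
Proof.
move=> /eqP xq; elim: i => [|i IHi]; first by rewrite expr1.
by rewrite expnSr exprM IHi.
Qed.

Lemma Fq_expq_sub2 c : c \in Fq -> c != 0 -> c ^+ (q - 2) = c^-1.
Proof.
move=> /eqP cq c_neq0; apply: (mulIf c_neq0); rewrite mulVf // -exprSr.
apply: (mulIf c_neq0); rewrite mul1r -exprSr.
by have -> : (q - 2).+2 = q by lia.
Qed.

Lemma poly_over_FqP u : poly_over_Fq q u <-> u \is a polyOver Fq.
Proof. by split=> [? | /polyOverP]; [apply/polyOverP|]. Qed.

Lemma polyOver_FqE u : (u \is a polyOver Fq) = (map_poly frobq u == u).
Proof.
apply/polyOverP/eqP => [uFq | uE i]; last by rewrite FqE -{2}uE coef_map.
by apply/polyP => i; rewrite coef_map; exact/eqP/uFq.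
Qed.

Lemma Xn_sub1_polyOver m : 'X^m - 1 \is a polyOver Fq.
Proof. by rewrite rpredB ?polyOverXn ?rpred1. Qed.

Lemma polyOver_Fq_gcdp u v : u \is a polyOver Fq -> v \is a polyOver Fq ->
  gcdp u v \is a polyOver Fq.
Proof. by rewrite !polyOver_FqE gcdp_map => /eqP-> /eqP->. Qed.

Lemma LinP_widen u N : (size u <= N)%N ->
  LinP u = \sum_(i < N) u`_i *: 'X^(q ^ i).
Proof.
move=> uN; rewrite /Defs.LinP (big_ord_widen N (fun i => u`_i *: 'X^(q ^ i))) //.
rewrite big_mkcond; apply: eq_bigr => i _.
by case: ltnP => // /(nth_default 0) ->; rewrite scale0r.
Qed.

Fact LinP_is_linear : linear LinP.
Proof.
move=> c u v; set N := maxn (size u) (size v).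
have uN : (size u <= N)%N := leq_maxl _ _.
have vN : (size v <= N)%N := leq_maxr _ _.
have uvN : (size (c *: u + v)%R <= N)%N.
  by rewrite (leq_trans (size_polyD _ _)) // geq_max (leq_trans (size_scale_leq _ _)).
rewrite !(LinP_widen uN, LinP_widen vN, LinP_widen uvN) scaler_sumr -big_split.
by apply: eq_bigr => i _; rewrite coefD coefZ scalerDl scalerA.
Qed.

HB.instance Definition _ :=
  GRing.isLinear.Build L {poly L} {poly L} *:%R LinP LinP_is_linear.

Lemma LinE u N : (size u <= N)%N ->
  forall x, Lin u x = \sum_(i < N) u`_i * x ^+ (q ^ i).
Proof.
move=> uN x; rewrite /Defs.Lin (LinP_widen uN) horner_sum.
by apply: eq_bigr => i _; rewrite hornerZ hornerXn.
Qed.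

Lemma Lin0 x : Lin 0 x = 0.
Proof. by rewrite /Defs.Lin linear0 horner0. Qed.

Lemma LinD u v x : Lin (u + v) x = Lin u x + Lin v x.
Proof. by rewrite /Defs.Lin linearD hornerD. Qed.

Lemma LinB u v x : Lin (u - v) x = Lin u x - Lin v x.
Proof. by rewrite /Defs.Lin linearB hornerD hornerN. Qed.

Lemma LinZ c u x : Lin (c *: u) x = c * Lin u x.
Proof. by rewrite /Defs.Lin linearZ hornerZ. Qed.

Lemma Lin_sum I (r : seq I) (P : pred I) (F : I -> {poly L}) x :
  Lin (\sum_(i <- r | P i) F i) x = \sum_(i <- r | P i) Lin (F i) x.
Proof. by rewrite /Defs.Lin linear_sum horner_sum. Qed.

Lemma Lin_Xn m x : Lin 'X^m x = x ^+ (q ^ m).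
Proof.
rewrite (LinE (N := m.+1)) ?size_polyXn // big_ord_recr big1 /=.
  by rewrite coefXn eqxx add0r mul1r.
by move=> i _; rewrite coefXn ltn_eqF ?mul0r.
Qed.

Lemma LinX x : Lin 'X x = frobq x.
Proof. by rewrite -['X]expr1 Lin_Xn expn1. Qed.

Lemma Lin1 x : Lin 1 x = x.
Proof. by rewrite -(expr0 'X) Lin_Xn expn0 expr1. Qed.

Lemma LinC c x : Lin c%:P x = c * x.
Proof. by rewrite -[c%:P]mulr1 mul_polyC LinZ Lin1. Qed.

Lemma Lin_mulX u x : Lin (u * 'X) x = Lin u (frobq x).
Proof.
have uXN : (size (u * 'X)%R <= (size u).+1)%N.
  by rewrite (leq_trans (size_polyMleq _ _)) // size_polyX addn2.
rewrite (LinE uXN) (LinE (leqnn _)) big_ord_recl coefMX eqxx mul0r add0r.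
by apply: eq_bigr => i _; rewrite coefMX /= expnS exprM.
Qed.

Section LinAdditive.
Variable u : {poly L}.

Fact Lin_is_nmod_morphism : nmod_morphism (Lin u).
Proof.
split=> [|x y]; rewrite !(LinE (leqnn _)).
  by rewrite big1 // => i _; rewrite expr0n expn_eq0 gtn_eqF ?(ltnW q_gt1) ?mulr0.
rewrite -big_split; apply: eq_bigr => i _.
by rewrite exprDn_pchar ?mulrDr // pnatX q_pchar.
Qed.

HB.instance Definition _ :=
  GRing.isNmodMorphism.Build L L (Lin u) Lin_is_nmod_morphism.

End LinAdditive.

Lemma Lin_FqZ u c x : c \in Fq -> Lin u (c * x) = c * Lin u x.
Proof.
move=> cFq; rewrite !(LinE (leqnn _)) mulr_sumr.
by apply: eq_bigr => i _; rewrite exprMn (Fq_expq_pow _ cFq) mulrCA.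
Qed.

Lemma Lin_frobq v x : v \is a polyOver Fq -> Lin v (frobq x) = frobq (Lin v x).
Proof.
move=> /polyOverP vFq; rewrite !(LinE (leqnn _)) rmorph_sum.
by apply: eq_bigr => i _; rewrite rmorphM /= [frobq v`_i](eqP (vFq i)) /frobq exprAC.
Qed.

Lemma Lin_mul u v x : v \is a polyOver Fq -> Lin (u * v) x = Lin u (Lin v x).
Proof.
move=> vFq; elim/poly_ind: u x => [|u c IHu] x; first by rewrite mul0r !Lin0.
rewrite mulrDl mulrAC mul_polyC !LinD !Lin_mulX LinZ LinC IHu.
by rewrite Lin_frobq.
Qed.

Lemma coef_LinP u j : (LinP u)`_j = \sum_(i < size u) u`_i * ((q ^ i)%N == j)%:R.
Proof.
by rewrite /Defs.LinP coef_sum; apply: eq_bigr => i _; rewrite coefZ coefXn eq_sym.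
Qed.

Lemma size_LinP u : u != 0 -> size (LinP u) = (q ^ (size u).-1).+1.
Proof.
move=> u_neq0; have /prednK su : (0 < size u)%N by rewrite size_poly_gt0.
set d := (size u).-1; apply/anti_leq/andP; split.
  apply/leq_sizeP => j dj; rewrite coef_LinP big1 // => i _.
  have : (q ^ i <= q ^ d)%N by rewrite leq_exp2l // -ltnS su.
  by move=> /leq_ltn_trans/(_ dj)/ltn_eqF->; rewrite mulr0.
have d_lt : (d < size u)%N by rewrite -su.
rewrite ltnNge; apply/negP => /leq_sizeP/(_ _ (leqnn _)).
rewrite coef_LinP (bigD1 (Ordinal d_lt)) //= eqxx mulr1 big1 ?addr0.
  by move/eqP; rewrite -lead_coefE lead_coef_eq0 (negbTE u_neq0).
move=> i /eqP/val_eqP /= /negbTE i_neq_d.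
by rewrite eqn_exp2l // i_neq_d mulr0.
Qed.

Lemma card_Lin_kernel_le u : u != 0 ->
  (#|[set x | Lin u x == 0%R]| <= q ^ (size u).-1)%N.
Proof.
move=> u_neq0; have LinP_neq0 : LinP u != 0 by rewrite -size_poly_gt0 size_LinP.
by have := card_root_set LinP_neq0; rewrite size_LinP.
Qed.

Lemma Lin_coprime_kernel u v x :
    u \is a polyOver Fq -> v \is a polyOver Fq -> coprimep u v ->
  Lin u x = 0 -> Lin v x = 0 -> x = 0.
Proof.
move=> uFq vFq /Bezout_eq1_coprimepP[[r s] /= rs1] ux vx.
by rewrite -[x]Lin1 -rs1 LinD !Lin_mul // ux vx !raddf0 addr0.
Qed.

Lemma Lin_comm u v x : u \is a polyOver Fq -> v \is a polyOver Fq ->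
  Lin u (Lin v x) = Lin v (Lin u x).
Proof. by move=> uFq vFq; rewrite -!Lin_mul // mulrC. Qed.

Lemma card_Fq_le : (#|Fq| <= q)%N.
Proof.
have sizeXqX : size ('X^q - 'X : {poly L}) = q.+1.
  by rewrite size_polyDl ?size_polyXn // size_polyN size_polyX ltnS.
rewrite -(@eq_card _ [set x | root ('X^q - 'X) x]) => [|x]; last first.
  by rewrite inE rootE !hornerE subr_eq0.
by rewrite (leq_trans (card_root_set _)) ?sizeXqX // -size_poly_gt0 sizeXqX.
Qed.

Lemma horner_eq_mod_XqsubX F M s : ('X^q - 'X) %| (F - M) -> s \in Fq ->
  F.[s] = M.[s].
Proof.
move=> /dvdpP[m FM] /eqP sq; apply/eqP; rewrite -subr_eq0.
by have := congr1 (horner^~ s) FM; rewrite /= !hornerE sq subrr mulr0 => ->.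
Qed.

Section FieldOfOrderQn.
Variable n : nat.
Hypotheses (n_gt0 : (0 < n)%N) (cardL : #|L| = (q ^ n)%N).

Lemma expq_n x : x ^+ (q ^ n) = x.
Proof. by rewrite -cardL expf_card. Qed.

Lemma size_Xn_sub1 : size ('X^n - 1 : {poly L}) = n.+1.
Proof. by rewrite -polyC1 size_XnsubC. Qed.

Lemma Xn_sub1_neq0 : 'X^n - 1 != 0 :> {poly L}.
Proof. by rewrite -size_poly_gt0 size_Xn_sub1. Qed.

Lemma Lin_Xn_sub1 x : Lin ('X^n - 1) x = 0.
Proof. by rewrite LinB Lin_Xn Lin1 expq_n subrr. Qed.

Lemma card_Lin_kernel u : u \is a polyOver Fq -> u %| 'X^n - 1 ->
  #|[set x | Lin u x == 0%R]| = (q ^ (size u).-1)%N.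
Proof.
move=> uFq u_dvd; set v := ('X^n - 1) %/ u.
have vu : v * u = 'X^n - 1 by rewrite divpK.
have u_neq0 : u != 0 by apply: contraNneq Xn_sub1_neq0 => u0; rewrite -vu u0 mulr0.
have v_neq0 : v != 0 by apply: contraNneq Xn_sub1_neq0 => v0; rewrite -vu v0 mul0r.
have deg_vu : ((size v).-1 + (size u).-1)%N = n.
  have := size_mul v_neq0 u_neq0; rewrite vu size_Xn_sub1.
  by rewrite (polySpred u_neq0) (polySpred v_neq0) addSn addnS => -[].
have im_sub : [set Lin u x | x in L] \subset [set y | Lin v y == 0%R].
  by apply/subsetP => _ /imsetP[x _ ->]; rewrite inE -Lin_mul // vu Lin_Xn_sub1.
apply/eqP; rewrite eqn_leq card_Lin_kernel_le //=.
rewrite -(@leq_pmul2r (q ^ (size v).-1)) ?expn_gt0 ?(ltnW q_gt1) //.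
rewrite -expnD addnC deg_vu -cardL (card_ker_mul_card_image (raddfD (Lin u))).
by rewrite leq_mul2l (leq_trans (subset_leq_card im_sub)) ?card_Lin_kernel_le ?orbT.
Qed.

Lemma card_Lin_image u : u \is a polyOver Fq -> u %| 'X^n - 1 ->
  #|[set Lin u x | x in L]| = (q ^ (n - (size u).-1))%N.
Proof.
move=> uFq u_dvd; have du_le : ((size u).-1 <= n)%N.
  by rewrite -subn1 leq_subLR add1n -size_Xn_sub1 dvdp_leq ?Xn_sub1_neq0.
apply/eqP; rewrite -(@eqn_pmul2l (q ^ (size u).-1)) ?expn_gt0 ?(ltnW q_gt1) //.
rewrite -expnD subnKC // -cardL (card_ker_mul_card_image (raddfD (Lin u))).
by rewrite card_Lin_kernel.
Qed.

Lemma Lin_kernel_nontrivial u : u \is a polyOver Fq -> u %| 'X^n - 1 ->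
  (1 < size u)%N -> exists2 x, x != 0 & Lin u x = 0.
Proof.
move=> uFq u_dvd u_gt1.
have : (1 < #|[set x | Lin u x == 0%R]|)%N.
  rewrite card_Lin_kernel // (leq_trans q_gt1) // -{1}(expn1 q) leq_exp2l //.
  by rewrite -ltnS prednK // ltnW.
case/card_gt1P => x [y] []; rewrite !inE => /eqP ux /eqP uy.
have [-> | x_neq0] := eqVneq x 0; last by exists x.
by exists y; rewrite // eq_sym.
Qed.

Lemma Lin_common_kernel_nontrivial u v :
    u \is a polyOver Fq -> v \is a polyOver Fq -> v %| 'X^n - 1 ->
  ~~ coprimep u v -> exists2 x, x != 0 & Lin u x = 0 /\ Lin v x = 0.
Proof.
move=> uFq vFq v_dvd not_coprime; set d := gcdp u v.
have d_neq0 : d != 0.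
  rewrite gcdp_eq0 negb_and; apply/orP; right; apply: contraTneq v_dvd => ->.
  by rewrite dvd0p Xn_sub1_neq0.
have d_gt1 : (1 < size d)%N.
  move: not_coprime; rewrite /coprimep -/d ltn_neqAle eq_sym => ->.
  by rewrite size_poly_gt0.
have [x x_neq0 dx] := Lin_kernel_nontrivial (polyOver_Fq_gcdp uFq vFq)
  (dvdp_trans (dvdp_gcdr u v) v_dvd) d_gt1.
exists x => //; split;
  [rewrite -(divpK (dvdp_gcdl u v)) | rewrite -(divpK (dvdp_gcdr u v))];
  by rewrite Lin_mul ?polyOver_Fq_gcdp // dx raddf0.
Qed.

Lemma Tr_Fq b : Tr q n b \in Fq.
Proof.
rewrite FqE /Tr rmorph_sum /=.
under eq_bigr do rewrite /frobq -exprM -expnSr.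
rewrite -(prednK n_gt0) big_ord_recr big_ord_recl /= prednK // expq_n expn0 expr1.
by rewrite addrC.
Qed.

Section LinearizedGa.
Variable a : L.
Hypotheses (a_Fq : a \in Fq) (a_expn : a ^+ n = 1).

Local Notation T := (Lin (ga n a)).

Lemma a_neq0 : a != 0.
Proof. by apply: contra_eq_neq a_expn => ->; rewrite expr0n gtn_eqF // eq_sym oner_eq0. Qed.

Lemma a_expn_pred : a ^+ n.-1 = a^-1.
Proof. by apply: (mulfI a_neq0); rewrite -exprS prednK // a_expn divff ?a_neq0. Qed.

Lemma mul_XsubC_ga : ('X - a%:P) * ga n a = 'X^n - 1.
Proof.
by rewrite mulrC divpK // dvdp_XsubCl rootE !hornerE a_expn subrr.
Qed.

Lemma ga_sum : ga n a = \sum_(i < n) a ^+ i *: 'X^(n.-1 - i).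
Proof.
apply: (mulfI (negbT (polyXsubC_eq0 a))).
rewrite mul_XsubC_ga -polyC1 -a_expn rmorphXn subrXX.
by congr (_ * _); apply: eq_bigr => i _; rewrite -rmorphXn mulrC mul_polyC.
Qed.

Lemma ga_polyOver : ga n a \is a polyOver Fq.
Proof.
rewrite polyOver_FqE /ga map_divp rmorphB /= map_polyXn rmorph1 map_polyXsubC /=.
by rewrite [frobq a](eqP a_Fq).
Qed.

Lemma ga_dvd_Xn_sub1 : ga n a %| 'X^n - 1.
Proof. by rewrite -mul_XsubC_ga dvdp_mull. Qed.

Lemma size_ga : size (ga n a) = n.
Proof.
have ga_neq0 : ga n a != 0.
  by apply: contra_eq_neq mul_XsubC_ga => ->; rewrite mulr0 eq_sym Xn_sub1_neq0.
have := size_mul (negbT (polyXsubC_eq0 a)) ga_neq0.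
by rewrite mul_XsubC_ga size_Xn_sub1 size_XsubC => -[].
Qed.

Lemma horner_ga : (ga n a).[a] = n%:R / a.
Proof.
rewrite ga_sum horner_sum (eq_bigr (fun=> a^-1)) ?sumr_const ?card_ord ?mulr_natl //.
move=> i _; have i_le : (i <= n.-1)%N by rewrite -ltnS prednK.
by rewrite hornerZ hornerXn -exprD subnKC // a_expn_pred.
Qed.

Lemma Lin_ga_expq x : T x ^+ q = a * T x.
Proof.
have := Lin_Xn_sub1 x; rewrite -mul_XsubC_ga Lin_mul ?ga_polyOver //.
by rewrite LinB LinC LinX => /eqP; rewrite subr_eq0 => /eqP.
Qed.

Section Delta.
Variable delta : L.
Hypotheses (delta_neq0 : delta != 0) (delta_expq : delta ^+ q = a * delta).

Lemma delta_expq_pow i : delta ^+ (q ^ i) = a ^+ i * delta.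
Proof.
elim: i => [|i IHi]; first by rewrite expr1 mul1r.
by rewrite expnSr exprM IHi exprMn delta_expq [_ ^+ q](eqP (rpredX i a_Fq)) mulrA -exprSr.
Qed.

Lemma Lin_delta u z : z \in Fq -> Lin u (delta * z) = z * delta * u.[a].
Proof.
move=> z_Fq; rewrite mulrC Lin_FqZ // (LinE (leqnn _)) horner_coef -mulrA.
congr (_ * _); rewrite mulr_sumr; apply: eq_bigr => i _.
by rewrite delta_expq_pow; ring.
Qed.

Lemma Lin_ga_delta b : T (delta * b) = delta / a * Tr q n b.
Proof.
rewrite ga_sum Lin_sum /Tr mulr_sumr (reindex_inj rev_ord_inj) /=.
apply: eq_bigr => i _; rewrite LinZ Lin_Xn subnS predn_sub exprMn delta_expq_pow.
have i_le : (i <= n.-1)%N by rewrite -ltnS prednK.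
by rewrite !mulrA -exprD subnKC ?leq_subr // subKn // a_expn_pred [a^-1 * _]mulrC.
Qed.

Lemma Lin_ga_div_delta_Fq x : delta^-1 * T x \in Fq.
Proof.
rewrite FqE /frobq exprMn exprVn delta_expq Lin_ga_expq invfM mulrACA mulVf ?a_neq0 //.
by rewrite mul1r.
Qed.

Lemma Lin_ga_image : [set T x | x in L] = [set delta * z | z in Fq].
Proof.
apply/eqP; rewrite eqEcard; apply/andP; split.
  apply/subsetP => _ /imsetP[x _ ->]; apply/imsetP.
  by exists (delta^-1 * T x); rewrite ?Lin_ga_div_delta_Fq // mulVKf.
rewrite card_imset; last exact: mulfI.
rewrite card_Lin_image ?ga_polyOver ?ga_dvd_Xn_sub1 // size_ga.
have -> : (n - n.-1 = 1)%N by lia.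
by rewrite expn1 card_Fq_le.
Qed.

Lemma Lin_ga_horner_delta f z : z \in Fq ->
  T f.[delta * z] =
    delta * (a^-1 * \sum_(i < size f) Tr q n (delta ^+ i / delta * f`_i) * z ^+ i).
Proof.
move=> z_Fq; rewrite horner_coef raddf_sum /= !mulr_sumr; apply: eq_bigr => i _.
have -> : f`_i * (delta * z) ^+ i = z ^+ i * (delta * (delta ^+ i / delta * f`_i)).
  by rewrite exprMn; field.
by rewrite Lin_FqZ ?rpredX // Lin_ga_delta; field; rewrite a_neq0.
Qed.

Section Pmap.
Variables f h k : {poly L}.
Hypotheses (h_Fq : h \is a polyOver Fq)
  (k_Fq : {in Fq, forall z, k.[delta * z] \in Fq /\ k.[delta * z] != 0}).

Local Notation P := (Pmap q n a f h k).
Local Notation Q := (Qbar q n a delta f h k).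

Lemma k_Lin_ga x : k.[T x] \in Fq /\ k.[T x] != 0.
Proof. by have := k_Fq (Lin_ga_div_delta_Fq x); rewrite mulVKf. Qed.

Lemma Qbar_Fq : {in Fq, forall z, Q z \in Fq}.
Proof.
move=> z z_Fq; rewrite /Qbar rpredD ?rpredM ?rpredV ?(k_Fq z_Fq).1 ?(rpred_horner h_Fq) //.
by apply: rpred_sum => i _; rewrite rpredM ?rpredX ?Tr_Fq.
Qed.

Lemma Lin_ga_Pmap x : T (P x) = delta * Q (delta^-1 * T x).
Proof.
rewrite /Pmap; have z_Fq := Lin_ga_div_delta_Fq x; set z := delta^-1 * T x in z_Fq *.
have Tx : T x = delta * z by rewrite mulVKf.
rewrite Tx raddfD /= Lin_FqZ ?(k_Fq z_Fq).1 // Lin_comm ?ga_polyOver // Tx Lin_delta //.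
by rewrite Lin_ga_horner_delta // /Qbar mulrDr; congr (_ + _); ring.
Qed.

Lemma Pmap_inj_coprime : injective P -> coprimep h (ga n a).
Proof.
move=> P_inj; apply/negPn/negP.
case/(Lin_common_kernel_nontrivial h_Fq ga_polyOver ga_dvd_Xn_sub1) => x x_neq0 [hx Tx].
have := P_inj x 0; rewrite /Pmap hx Tx !raddf0 => /(_ erefl) x0.
by rewrite x0 eqxx in x_neq0.
Qed.

Lemma Qbar_inj_of_Pmap_bij : bijective P -> {in Fq &, injective Q}.
Proof.
case=> P' PK P'K; apply/imset_injP; rewrite eqn_leq leq_imset_card /=.
apply/subset_leq_card/subsetP => w w_Fq.
have : delta * w \in [set T x | x in L] by rewrite Lin_ga_image imset_f.
case/imsetP => x _ Tx; apply/imsetP; exists (delta^-1 * T (P' x)).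
  exact: Lin_ga_div_delta_Fq.
by apply: (mulfI delta_neq0); rewrite -Lin_ga_Pmap P'K Tx.
Qed.

Lemma Pmap_inj : coprimep h (ga n a) -> {in Fq &, injective Q} -> injective P.
Proof.
move=> coprime_h Q_inj x1 x2 Px12; have z_Fq := Lin_ga_div_delta_Fq.
have Tx12 : T x1 = T x2.
  have := congr1 T Px12; rewrite !Lin_ga_Pmap => /(mulfI delta_neq0).
  move=> /(Q_inj _ _ (z_Fq x1) (z_Fq x2)) /(congr1 (GRing.mul delta)).
  by rewrite !mulVKf.
move: Px12; rewrite /Pmap Tx12 => /addrI /(mulfI (k_Lin_ga x2).2) hx12.
apply/eqP; rewrite -subr_eq0; apply/eqP.
apply: (Lin_coprime_kernel h_Fq ga_polyOver coprime_h).
  by rewrite raddfB /= hx12 subrr.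
by rewrite raddfB /= Tx12 subrr.
Qed.

Lemma Pmap_bijectiveP : bijective P <-> coprimep h (ga n a) /\ permutes_on Fq Q.
Proof.
split=> [P_bij | [coprime_h [_ Q_inj]]]; last exact/injF_bij/Pmap_inj.
split; first exact/Pmap_inj_coprime/bij_inj.
by split; [exact: Qbar_Fq | exact: Qbar_inj_of_Pmap_bij].
Qed.

Section Inverse.
Variables R H F : {poly L}.
Hypotheses (Q_inj : {in Fq &, injective Q})
  (R_Fq : {in Fq, forall z, R.[z] \in Fq /\ Q R.[z] = z}).

Local Notation P0 := (P0map q n a delta k R H F).

Lemma QbarK : {in Fq, forall z, R.[Q z] = z}.
Proof. by move=> z z_Fq; have [RQ_Fq QRQ] := R_Fq (Qbar_Fq z_Fq); apply: Q_inj. Qed.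

Lemma P0map_PmapE x : P0 (P x) =
  F.[Q (delta^-1 * T x)] + (k.[T x])^-1 * Lin H f.[T x] + Lin (H * h) x.
Proof.
have [kT_Fq kT_neq0] := k_Lin_ga x.
rewrite /P0map Lin_ga_Pmap mulKf // QbarK ?Lin_ga_div_delta_Fq // mulVKf //.
by rewrite Fq_expq_sub2 // /Pmap raddfD /= Lin_FqZ // -Lin_mul // mulrDr mulKf // addrA.
Qed.

Lemma PmapK_Xn_sub1 : ('X^n - 1) %| (h * H - 1) ->
    ('X^q - 'X) %| (F - ((- (k ^+ (q - 2)) * (LinP H \Po f)) \Po (delta *: R))) ->
  cancel P P0.
Proof.
move=> /dvdpP[m hH] /horner_eq_mod_XqsubX F_mod x; rewrite P0map_PmapE.
have [kT_Fq kT_neq0] := k_Lin_ga x; have z_Fq := Lin_ga_div_delta_Fq x.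
rewrite F_mod ?Qbar_Fq // horner_comp hornerZ QbarK // mulVKf //.
rewrite !hornerE horner_comp Fq_expq_sub2 // -[(LinP H).[_]]/(Lin H _) mulNr addNr add0r.
have -> : H * h = m * ('X^n - 1) + 1 by rewrite mulrC -hH subrK.
by rewrite LinD Lin_mul ?Xn_sub1_polyOver // Lin_Xn_sub1 raddf0 add0r Lin1.
Qed.

Lemma PmapK_ga : n%:R != 0 :> L -> ga n a %| (h * H - 1) ->
    ('X^q - 'X) %| (F - ((- (k ^+ (q - 2)) * (LinP H \Po f)
                          + (a * (1 - h.[a] * H.[a]) / n%:R) *: 'X) \Po (delta *: R))) ->
  cancel P P0.
Proof.
move=> n_neq0 /dvdpP[m hH] /horner_eq_mod_XqsubX F_mod x; rewrite P0map_PmapE.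
have [kT_Fq kT_neq0] := k_Lin_ga x; have z_Fq := Lin_ga_div_delta_Fq x.
rewrite F_mod ?Qbar_Fq // horner_comp hornerZ QbarK // mulVKf //.
rewrite !hornerE horner_comp Fq_expq_sub2 // -[(LinP H).[_]]/(Lin H _).
have -> : H * h = m * ga n a + 1 by rewrite mulrC -hH subrK.
have m_a : m.[a] = a * (h.[a] * H.[a] - 1) / n%:R.
  have := congr1 (horner^~ a) hH; rewrite /= !hornerE horner_ga => ->.
  by field; rewrite n_neq0 a_neq0.
have Lm_Tx : Lin m (T x) = delta^-1 * T x * delta * m.[a].
  by rewrite -Lin_delta // mulVKf.
rewrite LinD Lin_mul ?ga_polyOver // Lm_Tx m_a Lin1.
by field; rewrite n_neq0 kT_neq0 delta_neq0.
Qed.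

End Inverse.
End Pmap.
End Delta.
End LinearizedGa.
End FieldOfOrderQn.
End FrobeniusPower.

Theorem theorem3p9 (L : finFieldType) (p q e n : nat)
  (a delta : L) (f h k : {poly L}) :
  prime p -> p \in [pchar L] -> (0 < e)%N -> q = (p ^ e)%N ->
  (0 < n)%N -> #|L| = (q ^ n)%N ->
  a \in Fq q -> a ^+ n = 1 ->
  delta != 0 -> delta ^+ q = a * delta ->
  poly_over_Fq q h ->
  {in Fq q, forall x, k.[delta * x] \in Fq q /\ k.[delta * x] != 0} ->
  (bijective (Pmap q n a f h k) <->
     coprimep h (ga n a) /\ permutes_on (Fq q) (Qbar q n a delta f h k))
  /\
  (bijective (Pmap q n a f h k) ->
   forall R H F : {poly L},
     {in Fq q, forall x,
        R.[x] \in Fq q /\ Qbar q n a delta f h k R.[x] = x} ->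
     poly_over_Fq q H ->
     (if (p %| n)%N then
        (size H <= n)%N /\ ('X^n - 1) %| (h * H - 1) /\
        ('X^q - 'X) %|
          (F - ((- (k ^+ (q - 2)) * (LinP q H \Po f)) \Po (delta *: R)))
      else
        (size H <= n.-1)%N /\ ga n a %| (h * H - 1) /\
        ('X^q - 'X) %|
          (F - ((- (k ^+ (q - 2)) * (LinP q H \Po f)
                 + (a * (1 - h.[a] * H.[a]) / n%:R) *: 'X) \Po (delta *: R)))) ->
     cancel (Pmap q n a f h k) (P0map q n a delta k R H F) /\
     cancel (P0map q n a delta k R H F) (Pmap q n a f h k)).
Proof.
move=> p_prime p_char e_gt0 qE n_gt0 cardL a_Fq a_expn delta_neq0 delta_expq hFq k_Fq.
have q_pchar : [pchar L].-nat q by rewrite qE pnatX (pnatE _ p_prime) p_char.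
have q_gt1 : (1 < q)%N by rewrite qE -(expn0 p) ltn_exp2l ?prime_gt1.
have h_Fq := (poly_over_FqP q_pchar q_gt1 h).1 hFq.
have P_bijP := Pmap_bijectiveP q_pchar q_gt1 n_gt0 cardL a_Fq a_expn delta_neq0
  delta_expq f h_Fq k_Fq.
(* The degree bounds on H and H \in F_q[x] only make H unique. *)
split=> // P_bij R H F R_Fq _ F_spec.
have [_ [_ Q_inj]] := P_bijP.1 P_bij.
suff P0K : cancel (Pmap q n a f h k) (P0map q n a delta k R H F).
  by split; last exact/(bij_can_sym P_bij).
move: F_spec; case: ifP => [_ | p_ndvd_n] [_ [hH_dvd F_mod]].
  exact: (PmapK_Xn_sub1 q_pchar q_gt1 n_gt0 cardL a_Fq a_expn delta_neq0
    delta_expq h_Fq k_Fq Q_inj R_Fq).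
apply: (PmapK_ga q_pchar q_gt1 n_gt0 cardL a_Fq a_expn delta_neq0
  delta_expq h_Fq k_Fq Q_inj R_Fq) => //.
by rewrite -(dvdn_pcharf p_char) p_ndvd_n.
Qed.
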